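(* Fix $V>0$. For $x\in\mathbb N$ let $\delta=V/x$ and consider the discrete first-price auction with $n=2$ bidders, in the model without ties, with values drawn independently and uniformly from $X_\delta=\{0,\delta,2\delta,\dots,x\delta=V\}$ and bids in $X_\delta$. Let $\beta_\delta$ be any symmetric equilibrium of this game. Then $\max_{v\in X_\delta}|\beta_\delta(v)-v/2|\le\delta/2$, so $\beta_\delta$ converges uniformly to the continuous equilibrium bidding function $v\mapsto v/2$ as $\delta\to0$; and the expected highest bid $\mathbb E[\max\{\beta_\delta(v_1),\beta_\delta(v_2)\}]$ converges, as $\delta\to0$, to $V/3$, the expected highest bid in the continuous first-price auction with two bidders whose values are i.i.d. uniform on $[0,V]$ and who bid $v/2$.
   Context: Model. Two risk-neutral bidders compete for one indivisible object. Values and bids lie in $X_\delta$; values are i.i.d. uniform on $X_\delta$. A strategy is a bidding function $\beta:X_\delta\to X_\delta$. In the model without ties, a bidder wins iff their bid is strictly higher than the opponent's (if tied, nobody wins). In the first-price auction, a bidder with value $v_i$ bidding $b_i$ gets expected payoff $(v_i-b_i)\Pr(i\text{ wins})$. An equilibrium is a profile of bidding functions such that each bidder's bidding function maximises their expected payoff given the other's (a pure-strategy Bayes–Nash equilibrium) and such that no bidder uses a weakly dominated bidding function (a bidding function is weakly dominated if some other bidding function yields at least as high expected payoff against every opponent bidding function, and strictly higher against some). A symmetric equilibrium is an equilibrium in which both bidders use the same bidding function. *)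

From HB Require Import structures.
From mathcomp Require Import all_boot all_order all_algebra.
From mathcomp Require Import all_classical all_reals all_analysis.
Set Implicit Arguments. Unset Strict Implicit. Unset Printing Implicit Defensive.
Import Order.TTheory GRing.Theory Num.Theory.
Local Open Scope ring_scope.

(* Grid X_delta = {0, delta, ..., x*delta = V}, delta = V/x, indexed by 'I_x.+1:
   index k stands for the value/bid k*delta. *)
Definition grid (R : realType) (V : R) (x : nat) (k : 'I_x.+1) : R :=
  k%:R * (V / x%:R).

(* A (pure) bidding function X_delta -> X_delta, in index form. *)
Definition strategy (x : nat) := 'I_x.+1 -> 'I_x.+1.

(* Probability that a bid b strictly beats the opponent's bid when the opponent
   uses gamma and his value is uniform on the grid (model without ties). *)
Definition winprob (R : realType) (x : nat) (gamma : strategy x) (b : 'I_x.+1) : R :=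
  #|[set i : 'I_x.+1 | (gamma i < b)%N]|%:R / x.+1%:R.

Definition payoff (R : realType) (V : R) (x : nat) (beta gamma : strategy x) : R :=
  \sum_(v : 'I_x.+1)
     (x.+1%:R)^-1 * ((grid V v - grid V (beta v)) * winprob R gamma (beta v)).

Definition best_response (R : realType) (V : R) (x : nat) (beta gamma : strategy x) :=
  forall beta' : strategy x, payoff V beta' gamma <= payoff V beta gamma.

Definition weakly_dominated (R : realType) (V : R) (x : nat) (beta : strategy x) :=
  exists beta' : strategy x,
    (forall gamma : strategy x, payoff V beta gamma <= payoff V beta' gamma) /\
    (exists gamma : strategy x, payoff V beta gamma < payoff V beta' gamma).

Definition sym_equilibrium (R : realType) (V : R) (x : nat) (beta : strategy x) :=
  best_response V beta beta /\ ~ weakly_dominated V beta.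

Definition exp_highest_bid (R : realType) (V : R) (x : nat) (beta : strategy x) : R :=
  \sum_(v1 : 'I_x.+1) \sum_(v2 : 'I_x.+1)
     (x.+1%:R ^+ 2)^-1 * Num.max (grid V (beta v1)) (grid V (beta v2)).

From HB Require Import structures.
From mathcomp Require Import all_boot all_order all_algebra.
From mathcomp Require Import all_classical all_reals all_analysis.
From mathcomp Require Import zify ring lra.
Import Order.TTheory GRing.Theory Num.Theory.
Set Implicit Arguments. Unset Strict Implicit. Unset Printing Implicit Defensive.

(* Work with grid indices: the equilibrium strategy is a map B on {0..x} and
   F b = #{i <= x | B i < b} is the number of opponent types a bid b beats.
   1. Combinatorial core (section [Thresholds], pure nat arithmetic): if B
      never overbids and no single type gains by deviating to a lower bid,
      then B is nondecreasing, {i | B i < b} is the initial segment [0, F b),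
      and by induction on b the thresholds satisfy 2b - 1 <= F b <= 2b.
      Reading this at b = B v yields |2 B v - v| <= 1.
   2. Game layer: a strategy that overbids somewhere is weakly dominated by
      bidding one's own value there, and a best response admits no profitable
      single-type deviation; so a symmetric equilibrium satisfies the
      hypotheses of the core, giving the uniform bound |beta v - v/2| <= d/2.
   3. Expected highest bid: max is compatible with the bound, so the expected
      highest bid is within d/2 of d/2 * E[max(v1, v2)], which equals
      V/3 + V/(12(x+1)) by the closed form of sum_{i,j<=n} max(i,j); the
      resulting O(V/x) error bound gives the limit V/3. *)

Definition nbelow (x : nat) (B : nat -> nat) (b : nat) : nat :=
  count (fun i => B i < b) (iota 0 x.+1).

Lemma nbelow0 x B : nbelow x B 0 = 0.
Proof. by rewrite /nbelow (@eq_count _ _ pred0) ?count_pred0. Qed.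

Lemma nbelow_le x B b : nbelow x B b <= x.+1.
Proof. by rewrite -[x.+1](size_iota 0) count_size. Qed.

Lemma nbelow_split x B b b' : b <= b' ->
  nbelow x B b' = nbelow x B b + count (fun i => b <= B i < b') (iota 0 x.+1).
Proof.
move=> le_bb'; rewrite /nbelow -count_predUI.
have -> : count (predI (fun i => B i < b) (fun i => b <= B i < b')) (iota 0 x.+1) = 0.
  by apply/eqP; rewrite -leqn0 leqNgt -has_count; apply/hasP => -[i _ /=]; lia.
by rewrite addn0; apply: eq_count => i /=; lia.
Qed.

Section Thresholds.
Variables (x : nat) (B : nat -> nat).
Local Notation F := (nbelow x B).

Hypothesis no_overbid : forall v, v <= x -> B v <= v.
Hypothesis no_deviation : forall v b, v <= x -> b <= v ->
  (v - b) * F b <= (v - B v) * F (B v).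

(* Single crossing: a higher type never bids less. *)
Lemma bid_monotone v w : v < w -> w <= x -> B v <= B w.
Proof.
move=> lt_vw le_wx; rewrite leqNgt; apply/negP => lt_bid.
have win_more : F (B w) < F (B v).
  rewrite (nbelow_split _ _ (ltnW lt_bid)) -[X in X < _]addn0 ltn_add2l -has_count.
  by apply/hasP; exists w; rewrite ?mem_iota /= ?leqnn ?lt_bid //; lia.
have := no_overbid (v := v).
have := no_deviation (v := v) (b := B w).
have := no_deviation (v := w) (b := B v).
nia.
Qed.

Lemma below_nbelow i b : i <= x -> B i < b -> i < F b.
Proof.
move=> le_ix lt_ib; rewrite /nbelow.
rewrite -[x.+1](@subnKC i.+1) // iotaD count_cat.
rewrite (@eq_in_count _ _ predT) ?count_predT ?size_iota; first lia.
move=> j; rewrite mem_iota /= => lt_ji.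
rewrite ltnS leq_eqVlt in lt_ji; case/orP: lt_ji => [/eqP -> //|lt_ji].
by apply: leq_ltn_trans lt_ib; apply: bid_monotone.
Qed.

Lemma nbelow_above i b : i <= x -> b <= B i -> F b <= i.
Proof.
move=> le_ix le_bi; rewrite /nbelow.
rewrite -[x.+1](subnKC (leqW le_ix)) iotaD count_cat.
rewrite [X in _ + X](@eq_in_count _ _ pred0) ?count_pred0.
  by rewrite addn0 -{2}[i](size_iota 0) count_size.
move=> j; rewrite mem_iota /= => /andP[le_ij lt_jx]; apply/negbTE; rewrite -leqNgt.
rewrite leq_eqVlt in le_ij; case/orP: le_ij => [/eqP <- //|lt_ij].
by apply: leq_trans le_bi _; apply: bid_monotone; lia.
Qed.

Lemma below_iff i b : i <= x -> (B i < b) = (i < F b).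
Proof.
move=> le_ix; case: (ltnP (B i) b) => lt_ib; first by rewrite below_nbelow.
by apply/esym/negbTE; rewrite -leqNgt nbelow_above.
Qed.

Lemma threshold_jump_bid b : F b < F b.+1 -> B (F b.+1).-1 = b.
Proof.
move=> jump; have le_x : (F b.+1).-1 <= x by have := nbelow_le x B b.+1; lia.
have lt_b1 : B (F b.+1).-1 < b.+1 by rewrite below_iff //; lia.
have ge_b : ~~ (B (F b.+1).-1 < b) by rewrite below_iff //; lia.
lia.
Qed.

(* Upper half of the threshold step: F (b+1) <= 2b + 2 whenever F b <= 2b.
   The type just below F (b+1) bids b and must not prefer bidding b+1. *)
Lemma threshold_step_le b : F b <= 2 * b -> F b < F b.+1 -> F b.+1 <= 2 * b.+1.
Proof.
move=> le_Fb jump; have bid := threshold_jump_bid jump.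
have le_x : (F b.+1).-1 <= x by have := nbelow_le x B b.+1; lia.
case: (leqP b.+1 (F b.+1).-1) => le_b1; last lia.
have := no_deviation le_x le_b1; rewrite bid; nia.
Qed.

(* Lower half: F (b+1) >= 2b + 1 when some type bids at least b+1.
   The type F (b+1) bids above b and must not prefer bidding b. *)
Lemma threshold_step_ge b : 2 * b <= F b + 1 ->
  (exists2 v, v <= x & b < B v) -> 2 * b < F b.+1.
Proof.
move=> ge_Fb [v le_vx lt_bv].
have le_Fv : F b.+1 <= v by apply: nbelow_above.
have lt_bF : b < B (F b.+1).
  by rewrite ltnNge -ltnS below_iff ?ltnn //; lia.
have le_FB : F (B (F b.+1)) <= F b.+1 by apply: nbelow_above; lia.
have := no_overbid (v := F b.+1); have := no_deviation (v := F b.+1) (b := b).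
nia.
Qed.

Lemma threshold_bounds b : (exists2 v, v <= x & b <= B v) ->
  2 * b <= F b + 1 /\ F b <= 2 * b.
Proof.
elim: b => [|b IH] [v le_vx le_bv]; first by rewrite nbelow0.
have [ge_Fb le_Fb] := IH (ex_intro2 _ _ v le_vx (ltnW le_bv)).
have lt_F1 := threshold_step_ge ge_Fb (ex_intro2 _ _ v le_vx le_bv).
by split; [lia | apply: threshold_step_le; lia].
Qed.

Lemma bid_half_value v : v <= x -> 2 * B v <= v + 1 /\ v <= 2 * B v + 1.
Proof.
move=> le_vx.
have [ge_Fb le_Fb] := threshold_bounds (ex_intro2 _ _ v le_vx (leqnn (B v))).
have le_Fv : F (B v) <= v by apply: nbelow_above.
have lt_vF : v < F (B v).+1 by rewrite -below_iff.
have := threshold_step_le le_Fb (leq_ltn_trans le_Fv lt_vF).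
lia.
Qed.

End Thresholds.

Local Open Scope ring_scope.

(* Index form of a strategy, as a map on nat (values above x are irrelevant). *)
Definition bid_index (x : nat) (beta : strategy x) (i : nat) : nat := beta (inord i).

Lemma winprob_nbelow (R : realType) (x : nat) (gamma : strategy x) (b : 'I_x.+1) :
  winprob R gamma b = (nbelow x (bid_index gamma) b)%:R / x.+1%:R.
Proof.
rewrite /winprob cardsE cardE /nbelow -val_enum_ord count_map /enum_mem -enumT.
rewrite size_filter (@eq_filter _ _ predT) // filter_predT.
by congr (_%:R / _); apply: eq_count => i /=; rewrite /bid_index inord_val.
Qed.

Definition deviate (x : nat) (beta : strategy x) (v0 b : 'I_x.+1) : strategy x :=
  fun i => if i == v0 then b else beta i.

Lemma payoff_deviate (R : realType) (V : R) (x : nat) (beta gamma : strategy x)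
    (v0 b : 'I_x.+1) :
  payoff V (deviate beta v0 b) gamma = payoff V beta gamma +
   (x.+1%:R)^-1 * ((grid V v0 - grid V b) * winprob R gamma b
                  - (grid V v0 - grid V (beta v0)) * winprob R gamma (beta v0)).
Proof.
rewrite /payoff (bigD1 v0) //= [in RHS](bigD1 v0) //= /deviate eqxx.
under eq_bigr => i /negbTE -> do [].
ring.
Qed.

Lemma grid_step_gt0 (R : realType) (V : R) (x : nat) :
  0 < V -> (0 < x)%N -> 0 < V / x%:R.
Proof. by move=> gt0_V gt0_x; rewrite divr_gt0 // ltr0n. Qed.

(* Overbidding is weakly dominated by bidding one's value: the deviation never
   loses, and gains strictly against an opponent who always bids 0. *)
Lemma undominated_no_overbid (R : realType) (V : R) (x : nat) (beta : strategy x) :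
  0 < V -> (0 < x)%N -> ~ weakly_dominated V beta -> forall v, (beta v <= v)%N.
Proof.
move=> gt0_V gt0_x undominated v; rewrite leqNgt; apply/negP => overbid.
apply: undominated; exists (deviate beta v v).
have loss : grid V v - grid V (beta v) < 0.
  by rewrite subr_lt0 /grid ltr_pM2r ?(grid_step_gt0 gt0_V gt0_x) // ltr_nat.
split=> [gamma|].
  rewrite payoff_deviate lerDl subrr mul0r sub0r -mulNr mulr_ge0 ?invr_ge0 //.
  by rewrite mulr_ge0 ?oppr_ge0 ?(ltW loss) // /winprob divr_ge0.
exists (fun=> ord0); rewrite payoff_deviate ltrDl subrr mul0r sub0r -mulNr.
have -> : winprob R (fun=> ord0) (beta v) = 1.
  rewrite /winprob (_ : [set _ | _] = [set: 'I_x.+1]%SET) ?cardsT ?card_ord ?divff //.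
  by apply/setP => i; rewrite !inE /=; lia.
by rewrite mulr1 mulr_gt0 ?invr_gt0 // oppr_gt0.
Qed.

(* A best reply to beta admits no profitable deviation of a single type v to a
   bid b <= v; scaled by d / (x+1), this is the hypothesis of [Thresholds]. *)
Lemma best_response_no_deviation (R : realType) (V : R) (x : nat) (beta : strategy x) :
  0 < V -> (0 < x)%N -> best_response V beta beta -> (forall v, (beta v <= v)%N) ->
  forall v b : nat, (v <= x)%N -> (b <= v)%N ->
  ((v - b) * nbelow x (bid_index beta) b <=
   (v - bid_index beta v) * nbelow x (bid_index beta) (bid_index beta v))%N.
Proof.
move=> gt0_V gt0_x best no_overbid v b le_vx le_bv.
have le_bid : (bid_index beta v <= v)%N.
  by have := no_overbid (inord v); rewrite inordK.
have := best (deviate beta (inord v) (inord b)).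
rewrite payoff_deviate gerDl pmulr_rle0 ?invr_gt0 // subr_le0 !winprob_nbelow.
rewrite /grid !inordK ?ltnS ?(leq_trans le_bv) // -/(bid_index beta v).
rewrite -(ler_nat R) !natrM !natrB //.
set d := V / x%:R; set n := x.+1%:R.
have scale p q r : (p * d - q * d) * (r / n) = (p - q) * r * (d / n) by ring.
by rewrite !scale ler_pM2r // divr_gt0 ?grid_step_gt0 ?ltr0n.
Qed.

Lemma equilibrium_bid_index (R : realType) (V : R) (x : nat) (beta : strategy x) :
  0 < V -> (0 < x)%N -> sym_equilibrium V beta ->
  forall v : 'I_x.+1, (2 * beta v <= v + 1)%N /\ (v <= 2 * beta v + 1)%N.
Proof.
move=> gt0_V gt0_x [best undominated] v.
have no_overbid := undominated_no_overbid gt0_V gt0_x undominated.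
have core := bid_half_value _
  (best_response_no_deviation gt0_V gt0_x best no_overbid) (ltn_ord v).
rewrite /bid_index inord_val in core; apply: core => i le_ix.
by have := no_overbid (inord i); rewrite inordK.
Qed.

Lemma half_step_error (R : realFieldType) (d : R) (m M : nat) : 0 <= d ->
  (2 * m <= M + 1)%N -> (M <= 2 * m + 1)%N -> `|m%:R * d - M%:R * d / 2| <= d / 2.
Proof.
move=> ge0_d; rewrite -!(ler_nat R) !natrD mulr0n !addr0 => le_mM le_Mm.
by rewrite ler_norml; apply/andP; split; nra.
Qed.

Lemma equilibrium_uniform_bound (R : realType) (V : R) (x : nat) (beta : strategy x) :
  0 < V -> (0 < x)%N -> sym_equilibrium V beta ->
  forall v : 'I_x.+1, `|grid V (beta v) - grid V v / 2| <= (V / x%:R) / 2.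
Proof.
move=> gt0_V gt0_x eq_beta v.
have [le_bid ge_bid] := equilibrium_bid_index gt0_V gt0_x eq_beta v.
exact: half_step_error (ltW (grid_step_gt0 gt0_V gt0_x)) le_bid ge_bid.
Qed.

Lemma maxn_half_value (m1 m2 M1 M2 : nat) :
  (2 * m1 <= M1 + 1)%N -> (M1 <= 2 * m1 + 1)%N ->
  (2 * m2 <= M2 + 1)%N -> (M2 <= 2 * m2 + 1)%N ->
  (2 * maxn m1 m2 <= maxn M1 M2 + 1)%N /\ (maxn M1 M2 <= 2 * maxn m1 m2 + 1)%N.
Proof. by case: (leqP m1 m2); case: (leqP M1 M2); lia. Qed.

Lemma sum_maxn n :
  (6 * \sum_(0 <= i < n.+1) \sum_(0 <= j < n.+1) maxn i j = n * n.+1 * (4 * n + 5))%N.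
Proof.
elim: n => [|n IH]; first by rewrite !big_nat1.
rewrite big_nat_recr //=.
under eq_bigr => i _ do rewrite big_nat_recr //=.
rewrite big_split /=.
have -> : (\sum_(0 <= i < n.+1) maxn i n.+1 = n.+1 * n.+1)%N.
  rewrite (eq_big_nat _ _ (F2 := fun=> n.+1)) ?sum_nat_const_nat; first lia.
  by move=> i lt_in; apply/maxn_idPr; lia.
have -> : (\sum_(0 <= j < n.+2) maxn n.+1 j = n.+2 * n.+1)%N.
  rewrite (eq_big_nat _ _ (F2 := fun=> n.+1)) ?sum_nat_const_nat; first lia.
  by move=> j lt_jn; apply/maxn_idPl; lia.
nia.
Qed.

Lemma half_max_mean (R : realType) (V : R) (x : nat) : (0 < x)%N ->
  \sum_(v1 < x.+1) \sum_(v2 < x.+1)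
     (x.+1%:R ^+ 2)^-1 * ((maxn v1 v2)%:R * (V / x%:R) / 2)
  = V / 3 + V / (12 * (x%:R + 1)).
Proof.
move=> gt0_x.
set S := (\sum_(v1 < x.+1) \sum_(v2 < x.+1) maxn v1 v2)%N.
have sumS : 6 * (S%:R : R) = x%:R * (x%:R + 1) * (4 * x%:R + 5).
  have S6 : (6 * S = x * x.+1 * (4 * x + 5))%N.
    rewrite -sum_maxn big_mkord; congr (6 * _)%N.
    by apply: eq_bigr => i _; rewrite big_mkord.
  have := congr1 (fun k => k%:R : R) S6.
  by rewrite /= !natrM !natrD => ->; rewrite -natr1; ring.
transitivity ((x.+1%:R ^+ 2)^-1 * (V / x%:R / 2) * S%:R).
  rewrite natr_sum mulr_sumr; apply: eq_bigr => v1 _.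
  by rewrite natr_sum mulr_sumr; apply: eq_bigr => v2 _; ring.
have nz_x : (x%:R : R) != 0 by rewrite pnatr_eq0 -lt0n.
have nz_x1 : (x%:R + 1 : R) != 0 by rewrite natr1 pnatr_eq0.
rewrite -addn1 natrD (_ : S%:R = x%:R * (x%:R + 1) * (4 * x%:R + 5) / 6); last first.
  by rewrite -sumS; field.
by field; rewrite nz_x nz_x1.
Qed.

(* In a symmetric equilibrium the expected highest bid is within d/2 of the
   benchmark, hence within V/x of V/3. *)
Lemma exp_highest_bid_bound (R : realType) (V : R) (x : nat) (beta : strategy x) :
  0 < V -> (0 < x)%N -> sym_equilibrium V beta ->
  `|exp_highest_bid V beta - V / 3| <= V / x%:R.
Proof.
move=> gt0_V gt0_x eq_beta.
have gt0_d := grid_step_gt0 gt0_V gt0_x; set d := V / x%:R in gt0_d *.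
set c : R := (x.+1%:R ^+ 2)^-1.
have gt0_c : 0 < c by rewrite invr_gt0 exprn_gt0 ?ltr0n.
have near_benchmark : `|exp_highest_bid V beta -
    \sum_(v1 < x.+1) \sum_(v2 < x.+1) c * ((maxn v1 v2)%:R * d / 2)| <= d / 2.
  rewrite /exp_highest_bid -/c -sumrB; apply: le_trans (ler_norm_sum _ _ _) _.
  apply: (@le_trans _ _ (\sum_(v1 < x.+1) \sum_(v2 < x.+1) c * (d / 2))).
    apply: ler_sum => v1 _; rewrite -sumrB; apply: le_trans (ler_norm_sum _ _ _) _.
    apply: ler_sum => v2 _.
    have -> : Num.max (grid V (beta v1)) (grid V (beta v2)) =
              (maxn (beta v1) (beta v2))%:R * d.
      by rewrite /grid -/d maxEle ler_pM2r // ler_nat; case: leqP.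
    rewrite -mulrBr normrM gtr0_norm // ler_pM2l //.
    have [le1 ge1] := equilibrium_bid_index gt0_V gt0_x eq_beta v1.
    have [le2 ge2] := equilibrium_bid_index gt0_V gt0_x eq_beta v2.
    have [le_max ge_max] := maxn_half_value le1 ge1 le2 ge2.
    exact: (@half_step_error _ d (maxn (beta v1) (beta v2)) (maxn v1 v2)
                             (ltW gt0_d) le_max ge_max).
  rewrite !sumr_const !card_ord -mulrnA -[c * _ *+ _]mulr_natr natrM /c.
  have nz_x1 : (x.+1%:R : R) != 0 by rewrite pnatr_eq0.
  by rewrite [leLHS](_ : _ = d / 2) //; field.
rewrite half_max_mean // in near_benchmark.
have gt0_xr : (0 : R) < x%:R by rewrite ltr0n.
have gt0_bias : 0 < V / (12 * (x%:R + 1)) by rewrite divr_gt0 ?mulr_gt0 //; lra.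
have small_bias : V / (12 * (x%:R + 1)) <= d / 2.
  have nz_x : (x%:R : R) != 0 by rewrite lt0r_neq0.
  have nz_x1 : (x%:R + 1 : R) != 0 by rewrite lt0r_neq0 //; lra.
  rewrite -subr_ge0 /d.
  rewrite (_ : _ - _ = V * (5 * x%:R + 6) / (12 * x%:R * (x%:R + 1))); last first.
    by field; rewrite nz_x nz_x1.
  by rewrite divr_ge0 ?mulr_ge0 //; lra.
apply: le_trans (ler_distD (V / 3 + V / (12 * (x%:R + 1))) _ _) _.
rewrite addrAC subrr add0r (gtr0_norm gt0_bias); lra.
Qed.

Local Open Scope classical_set_scope.

Lemma cvg_inv_rate (R : realType) (C l : R) (u : nat -> R) : 0 < C ->
  (forall n, (0 < n)%N -> `|u n - l| <= C / n%:R) -> u @ \oo --> (l : R^o).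
Proof.
move=> gt0_C rate; apply/cvgrPdist_le => e gt0_e.
have gt0_Ce : 0 < C / e by rewrite divr_gt0.
near=> n.
have large_n : C / e < n%:R by near: n; exact: nbhs_infty_gtr.
have gt0_n : (0 < n)%N by rewrite -(ltr0n R); apply: lt_trans large_n.
rewrite distrC; apply: le_trans (rate n gt0_n) _.
rewrite ler_pdivrMr ?ltr0n // mulrC; apply: ltW.
by rewrite -ltr_pdivrMr.
Unshelve. all: by end_near.
Qed.

Unset Implicit Arguments.
Theorem corollary6 (R : realType) (V : R) (hV : 0 < V) :
  (forall (x : nat) (beta : strategy x), (0 < x)%N ->
     sym_equilibrium V beta ->
     forall v : 'I_x.+1, `|grid V (beta v) - grid V v / 2| <= (V / x%:R) / 2)
  /\
  (forall B : forall x : nat, strategy x,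
     (forall x : nat, (0 < x)%N -> sym_equilibrium V (B x)) ->
     (fun x : nat => exp_highest_bid V (B x)) @ \oo --> (V / 3 : R^o)).
Proof.
split=> [x beta gt0_x eq_beta|B eq_B].
  exact: equilibrium_uniform_bound.
apply: (cvg_inv_rate hV) => x gt0_x.
exact: exp_highest_bid_bound hV gt0_x (eq_B x gt0_x).
Qed.
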